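(* For every integer $l\ge1$, let $m=5l+3$, $L_1=[2l+1]$, $L_2=\{2l+2,\dots,4l+2\}$, $L_3=\{4l+3,\dots,5l+3\}$, and let $O_{L_s}$, $E_{L_s}$ denote the sets of odd and even elements of $L_s$. Let $\mathcal{I}_7(l)$ be the instance on $[m]$ with $A_i=E_{L_1}\cup(L_2\setminus\{i+2l+1\})\cup L_3$ for $i\in O_{L_1}$; $A_i=O_{L_2}\cup(L_1\setminus\{i\})\cup L_3$ for $i\in E_{L_1}$; $A_i=O_{L_2}\cup(L_1\setminus\{i-(2l+1)\})\cup L_3$ for $i\in E_{L_2}$; $A_i=E_{L_1}\cup(L_2\setminus\{i\})\cup L_3$ for $i\in O_{L_2}$; $A_i=\{2(i-4l-2)-1,\ 2(i-3l-2)\}$ for $i\in L_3$. Then the UMCD coding scheme is optimal for $\mathcal{I}_7(l)$, i.e. $\beta(\mathcal{I}_7(l))=\beta_{\text{UMCD}}(\mathcal{I}_7(l))$.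
   Context: Index coding: messages $x_i\in\mathbb{F}_q^t$; receiver $i$ wants $x_i$ and knows $x_j$, $j\in A_i\subseteq[m]\setminus\{i\}$. A $(t,r)$ index code is an encoder $\phi:\mathbb{F}_q^{mt}\to\mathbb{F}_q^r$ with decoders $\psi_i$ satisfying $\psi_i(\phi(x),(x_j)_{j\in A_i})=x_i$ for all messages and $i$; $\beta(\mathcal{I})$ is the infimum of $r/t$ over all $t$ and codes (over finite fields). $B_i=[m]\setminus(A_i\cup\{i\})$. For a $0/1$ matrix $\boldsymbol{G}$, $\boldsymbol{G}_{[k]}^L$ is the submatrix of the first $k$ rows and columns $L$; $\mathrm{mcm}$ is the maximum number of $1$-entries in distinct rows and columns (0 if no columns). UMCD algorithm: $N=[m]$, $k=0$; while $N\ne\emptyset$: $k\leftarrow k+1$; pick $w\in N$ minimizing $|A_w|$ over $N$ (arbitrary tie-breaking); row $k$ of $\boldsymbol{G}$ is the indicator of $\{w\}\cup A_w$; remove $w$ from $N$; remove every $i\in N$ with $\mathrm{mcm}(\boldsymbol{G}_{[k]}^{\{i\}\cup B_i})=\mathrm{mcm}(\boldsymbol{G}_{[k]}^{B_i})+1$; output $\beta_{\text{UMCD}}=k$. *)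

From mathcomp Require Import all_boot all_order all_algebra.
From mathcomp Require Import all_classical all_reals.
From mathcomp Require Import Rstruct.
Set Implicit Arguments. Unset Strict Implicit. Unset Printing Implicit Defensive.
Import Order.TTheory GRing.Theory Num.Theory.

(* An index coding instance on [m] is given by the side-information sets
   A : 'I_m -> {set 'I_m}; receiver i (0-indexed) wants x_i, knows x_j, j in A i. *)

(* The side information available to receiver i: the components in A_i
   (other components are masked to 0, so decoders cannot depend on them). *)
Definition mask (F : finFieldType) (m t : nat) (S : {set 'I_m})
    (x : {ffun 'I_m -> 'rV[F]_t}) : {ffun 'I_m -> 'rV[F]_t} :=
  [ffun j => if j \in S then x j else 0%R].

Definition has_code (F : finFieldType) (t r m : nat) (A : 'I_m -> {set 'I_m}) : Prop :=
  exists phi : {ffun 'I_m -> 'rV[F]_t} -> 'rV[F]_r,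
  exists psi : 'I_m -> 'rV[F]_r -> {ffun 'I_m -> 'rV[F]_t} -> 'rV[F]_t,
    forall (x : {ffun 'I_m -> 'rV[F]_t}) (i : 'I_m),
      psi i (phi x) (mask (A i) x) = x i.

Definition beta (m : nat) (A : 'I_m -> {set 'I_m}) : Rdefinitions.R :=
  inf [set x : Rdefinitions.R | exists (F : finFieldType) (t r : nat),
         (0 < t)%N /\ has_code F t r A /\ x = (r%:R / t%:R)%R].

Definition Bset (m : nat) (A : 'I_m -> {set 'I_m}) (i : 'I_m) : {set 'I_m} :=
  ~: (i |: A i).

(* A 0/1 matrix G with k rows and columns [m] is represented by the seq of its
   rows, each row being the set of columns holding a 1.
   matchable rows L n : there are n 1-entries of the submatrix with columns L
   in pairwise distinct rows and columns. *)
Definition matchable (m : nat) (rows : seq {set 'I_m}) (L : {set 'I_m}) (n : nat) : bool :=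
  [exists f : {ffun 'I_n -> 'I_(size rows)}, exists g : {ffun 'I_n -> 'I_m},
     [&& injectiveb f, injectiveb g &
         [forall a : 'I_n, (g a \in L) && (g a \in nth (finset.set0 : {set 'I_m}) rows (f a))]]].

Definition mcm (m : nat) (rows : seq {set 'I_m}) (L : {set 'I_m}) : nat :=
  \max_(n < m.+1 | matchable rows L n) n.

Definition umcd_next (m : nat) (A : 'I_m -> {set 'I_m}) (N : {set 'I_m})
    (rows : seq {set 'I_m}) (w : 'I_m) : {set 'I_m} :=
  let rows' := rcons rows (w |: A w) in
  [set i in N :\ w | mcm rows' (i |: Bset A i) != (mcm rows' (Bset A i)).+1].

(* ws is a valid complete execution of UMCD (with some tie-breaking) from the
   state (N, rows): each chosen w lies in N and minimises |A_w| over N,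
   and the loop stops exactly when N is empty. *)
Fixpoint umcd_run (m : nat) (A : 'I_m -> {set 'I_m}) (N : {set 'I_m})
    (rows : seq {set 'I_m}) (ws : seq 'I_m) : bool :=
  match ws with
  | [::] => N == finset.set0
  | w :: ws' =>
      [&& w \in N, [forall v in N, #|A w| <= #|A v|] &
          umcd_run A (umcd_next A N rows w) (rcons rows (w |: A w)) ws']
  end.

Definition umcd_output (m : nat) (A : 'I_m -> {set 'I_m}) (k : nat) : Prop :=
  exists ws : seq 'I_m, umcd_run A [set: 'I_m]%SET [::] ws /\ size ws = k.

(* The instance I_7(l), 1-indexed on {1,...,5l+3}. *)
Definition inL1 (l j : nat) : bool := (1 <= j) && (j <= 2 * l+1).
Definition inL2 (l j : nat) : bool := (2 * l+2 <= j) && (j <= 4 * l+2).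
Definition inL3 (l j : nat) : bool := (4 * l+3 <= j) && (j <= 5 * l+3).

Definition A7nat (l i j : nat) : bool :=
  if inL1 l i && odd i then
    [|| inL1 l j && ~~ odd j, inL2 l j && (j != i + (2 * l+1)) | inL3 l j]
  else if inL1 l i && ~~ odd i then
    [|| inL2 l j && odd j, inL1 l j && (j != i) | inL3 l j]
  else if inL2 l i && ~~ odd i then
    [|| inL2 l j && odd j, inL1 l j && (j != i - (2 * l+1)) | inL3 l j]
  else if inL2 l i && odd i then
    [|| inL1 l j && ~~ odd j, inL2 l j && (j != i) | inL3 l j]
  else if inL3 l i then
    (j == 2 * (i-4 * l-2) - 1) || (j == 2 * (i-3 * l-2))
  else false.

(* Element k : 'I_(5l+3) represents the paper's index k+1. *)
Definition I7 (l : nat) : 'I_(5 * l+3) -> {set 'I_(5 * l+3)} :=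
  fun i => [set j : 'I_(5 * l+3) | A7nat l i.+1 j.+1].
Arguments I7 : clear implicits.

From Pilot Require Import Defs.
From mathcomp Require Import all_boot all_order all_algebra.
From mathcomp Require Import reals Rstruct.
From mathcomp Require Import zify.
Set Implicit Arguments. Unset Strict Implicit. Unset Printing Implicit Defensive.
Import Order.TTheory GRing.Theory Num.Theory.

(* The messages of I_7(l) fall into l+1 triangles {4l+3+p, 2p+1, 2p+2l+2}, an
   element of L_3 together with its side information, and l+1 free indices.
   A receiver outside L_3 lacks one base point of every triangle and one more
   index, so from the l+1 triangle parities and the sum of all messages outside
   the even part of L_2 it recovers everything, peeling one row at a time: a
   linear code of length l+2. Conversely L_3 and the index 2 induce an acyclic
   subgraph on l+2 vertices, so beta >= l+2. UMCD picks the elements of L_3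
   first (side information of size 2, against 4l+1 for the others); each pick
   adds its triangle to G and removes nothing, since a row meeting a candidate
   i owns a private column of B_i. After the next pick the l+2 rows match
   perfectly into {i} u B_i while |B_i| = l+1, so all candidates are removed
   and beta_UMCD = l+2. *)

(** * Maximum matchings *)

Section Matchings.
Variables (m : nat) (rows : seq {set 'I_m}).

Lemma matchableP (L : {set 'I_m}) n :
  matchable rows L n <-> exists (f : 'I_n -> 'I_(size rows)) (g : 'I_n -> 'I_m),
    [/\ injective f, injective g & forall a, g a \in L /\ g a \in nth set0 rows (f a)].
Proof.
split.
  case/existsP => f /existsP [g /and3P [/injectiveP inj_f /injectiveP inj_g /forallP gP]].
  by exists f, g; split => // a; apply/andP.
case=> f [g [inj_f inj_g gP]]; apply/existsP; exists (finfun f); apply/existsP.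
exists (finfun g); apply/and3P; split.
- by apply/injectiveP => a b; rewrite !ffunE => /inj_f.
- by apply/injectiveP => a b; rewrite !ffunE => /inj_g.
- by apply/forallP => a; rewrite !ffunE; apply/andP.
Qed.

Lemma matchable_leq_card L n : matchable rows L n -> n <= #|L|.
Proof.
case/matchableP => f [g [_ inj_g gP]].
rewrite -[n]card_ord -(card_imset _ inj_g); apply/subset_leq_card/subsetP.
by move=> _ /imsetP[a _ ->]; case: (gP a).
Qed.

Lemma leq_mcm L n : matchable rows L n -> n <= mcm rows L.
Proof.
move=> Ln; have n_lt : n < m.+1.
  by rewrite ltnS (leq_trans (matchable_leq_card Ln)) // -[m in _ <= m]card_ord max_card.
exact: (@leq_bigmax_cond _ (fun n : 'I_m.+1 => matchable rows L n) val (Ordinal n_lt)).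
Qed.

Lemma mcm_leq_card L : mcm rows L <= #|L|.
Proof. by apply/bigmax_leqP => n; apply: matchable_leq_card. Qed.

Lemma matchable_setU1 i L n : matchable rows (i |: L) n.+1 -> matchable rows L n.
Proof.
case/matchableP => f [g [inj_f inj_g gP]].
have [a0 g_lift] : exists a0, forall b, g (lift a0 b) != i.
  case: (pickP (fun a => g a == i)) => [a0 /eqP ga0|no_i]; last by exists ord0 => b; rewrite no_i.
  by exists a0 => b; rewrite -ga0 (inj_eq inj_g) eq_sym neq_lift.
apply/matchableP; exists (f \o lift a0), (g \o lift a0); split.
- by move=> b c /inj_f /lift_inj.
- by move=> b c /inj_g /lift_inj.
move=> b; case: (gP (lift a0 b)) => /setU1P[gi|gL] grow //.
by move: (g_lift b); rewrite gi eqxx.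
Qed.

Lemma mcm_setU1 i L : mcm rows (i |: L) <= (mcm rows L).+1.
Proof. by apply/bigmax_leqP => -[[|n] _] //= /matchable_setU1 /leq_mcm. Qed.

Lemma size_leq_mcm (L : {set 'I_m}) (h : 'I_(size rows) -> 'I_m) :
  injective h -> (forall k, h k \in L /\ h k \in nth set0 rows k) -> size rows <= mcm rows L.
Proof. by move=> inj_h hP; apply/leq_mcm/matchableP; exists id, h; split. Qed.

(* A row containing i also owns a column of L that no other row meets; the
   column i of a matching can be moved there. *)
Lemma mcm_setU1_private i (L : {set 'I_m}) :
  (forall k : 'I_(size rows), i \in nth set0 rows k -> exists2 c, c \in L &
     forall k' : 'I_(size rows), (c \in nth set0 rows k') = (k' == k)) ->
  mcm rows (i |: L) <= mcm rows L.
Proof.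
move=> priv; apply/bigmax_leqP => n /matchableP[f [g [inj_f inj_g gP]]].
apply: leq_mcm; case: (pickP (fun a => g a == i)) => [a0 /eqP ga0|no_i]; last first.
  apply/matchableP; exists f, g; split => // a; case: (gP a) => /setU1P[gi|] //.
  by move: (no_i a); rewrite gi eqxx.
have i_row : i \in nth set0 rows (f a0) by rewrite -ga0; case: (gP a0).
have [c cL c_row] := priv _ i_row.
have c_notin a : a != a0 -> c \notin nth set0 rows (f a).
  by rewrite c_row (inj_eq inj_f).
apply/matchableP; exists f, (fun a => if a == a0 then c else g a); split => //.
- move=> a b; case: (a =P a0) => [-> | /eqP a_a0]; case: (b =P a0) => [-> | /eqP b_a0] //.
  + by move=> cg; case/negP: (c_notin b b_a0); rewrite cg; case: (gP b).
  + by move=> gc; case/negP: (c_notin a a_a0); rewrite -gc; case: (gP a).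
  + exact: inj_g.
move=> a; case: eqP => [-> | /eqP a_a0]; first by rewrite c_row eqxx.
case: (gP a) => /setU1P[gi|//] _; case/negP: a_a0.
by apply/eqP/inj_g; rewrite gi ga0.
Qed.

End Matchings.

Lemma leq_mcm_rcons m (T : eqType) (row : T -> {set 'I_m}) (s : seq T) (g : T -> 'I_m)
    (R L : {set 'I_m}) c :
  uniq s -> injective g -> (forall q, g q \in L /\ g q \in row q) ->
  c \in L -> c \in R -> (forall q, g q != c) ->
  (size s).+1 <= mcm (rcons (map row s) R) L.
Proof.
move=> s_uniq inj_g gP cL cR gc.
have size_rows : size (rcons (map row s) R) = (size s).+1 by rewrite size_rcons size_map.
rewrite -[X in X <= _]size_rows.
apply: (@size_leq_mcm _ _ _ (fun k => nth c (rcons (map g s) c) k)).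
- have uniq_gs : uniq (rcons (map g s) c).
    rewrite rcons_uniq (map_inj_uniq inj_g) s_uniq andbT.
    by apply/mapP => -[q _ cq]; move: (gc q); rewrite cq eqxx.
  have k_lt (k : 'I_(size (rcons (map row s) R))) : k < size (rcons (map g s) c).
    by apply: leq_trans (ltn_ord k) _; rewrite !size_rcons !size_map.
  by move=> k k' /eqP; rewrite nth_uniq ?k_lt // => /eqP; apply: val_inj.
move=> k; have := ltn_ord k; move: (nat_of_ord k) => {}k.
rewrite size_rows ltnS leq_eqVlt => /orP[/eqP ->|k_lt].
  by rewrite !nth_rcons !size_map ltnn eqxx.
rewrite !nth_rcons !size_map k_lt; case: s k_lt {s_uniq size_rows} => // q0 s k_lt.
by rewrite !(nth_map q0).
Qed.

Lemma size_uniq_all (T : finType) (s : seq T) :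
  uniq s -> (forall x, x \in s) -> size s = #|T|.
Proof. by move=> s_uniq s_all; rewrite -(card_uniqP s_uniq); apply: eq_card. Qed.

(** * Index codes *)

Section Codes.
Variables (F : finFieldType) (t r m : nat) (A : 'I_m -> {set 'I_m}).

Lemma decodable_has_code (phi : {ffun 'I_m -> 'rV[F]_t} -> 'rV[F]_r) :
  (forall i x x', phi x = phi x' -> {in A i, x =1 x'} -> x i = x' i) -> has_code F t r A.
Proof.
move=> dec; exists phi.
exists (fun i y z => if [pick x' | (phi x' == y) && (Defs.mask (A i) x' == z)] is Some x'
                     then x' i else 0%R).
move=> x i; case: pickP => [x' /andP[/eqP phi_x' /eqP mask_x'] | /(_ x)]; last by rewrite !eqxx.
apply: dec => // j jA; have := congr1 (fun f : {ffun 'I_m -> 'rV[F]_t} => f j) mask_x'.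
by rewrite !ffunE jA.
Qed.

(* A code determines the messages supported on S, decoded in increasing rank. *)
Lemma has_code_acyclic (S : {set 'I_m}) (rk : 'I_m -> nat) :
  (forall i j, i \in S -> j \in S -> j \in A i -> rk j < rk i) ->
  has_code F t r A -> t * #|S| <= r.
Proof.
move=> rkP [phi [psi dec]].
pose X := pffun_on (0 : 'rV[F]_t)%R S predT.
have X0 f j : f \in X -> j \notin S -> f j = 0%R.
  case/pffun_onP => /subsetP supp_f _ jS; apply/eqP; apply: contraNT jS => fj.
  exact: supp_f.
have phi_inj : {in X &, injective phi}.
  move=> x y xX yX phi_xy.
  suff xy n i : rk i < n -> x i = y i by apply/ffunP => i; apply: (xy (rk i).+1).
  elim: n i => // n IH i rk_i; case: (boolP (i \in S)) => iS; last by rewrite !X0.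
  rewrite -(dec x i) -(dec y i) phi_xy; congr psi; apply/ffunP => j; rewrite !ffunE.
  case: ifP => // jA; case: (boolP (j \in S)) => jS; last by rewrite !X0.
  exact/IH/(leq_trans (rkP i j iS jS jA)).
have := @leq_card_in _ _ phi _ phi_inj; rewrite card_pffun_on.
rewrite (_ : #|predT| = #|{: 'rV[F]_t}|) // !card_mx -expnM !mul1n.
rewrite leq_exp2l //; apply/card_gt1P; exists 0%R, 1%R.
by rewrite !inE eq_sym oner_neq0.
Qed.

End Codes.

Definition sum_code (V : zmodType) m r (R : 'I_r -> {set 'I_m})
    (x : {ffun 'I_m -> 'rV[V]_1}) : 'rV[V]_r :=
  \row_k (\sum_(j in R k) x j ord0 ord0)%R.

Lemma sum_code_peel (V : zmodType) m r (R : 'I_r -> {set 'I_m})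
    (x x' : {ffun 'I_m -> 'rV[V]_1}) k j0 :
  sum_code R x = sum_code R x' -> j0 \in R k -> {in R k :\ j0, x =1 x'} -> x j0 = x' j0.
Proof.
move=> code_xx' j0R agree; have := congr1 (fun v : 'rV[V]_r => v ord0 k) code_xx'.
rewrite !mxE (bigD1 j0) //= [RHS](bigD1 j0) //=.
rewrite (eq_bigr (fun j => x' j ord0 ord0)) => [/addIr xj0|j /andP[j_j0 jR]].
  by apply/rowP => i; rewrite ord1.
by rewrite agree // !inE j_j0 jR.
Qed.

Lemma beta_eq_nat m (A : 'I_m -> {set 'I_m}) (F0 : finFieldType) k :
  has_code F0 1 k A -> (forall F t r, has_code F t r A -> t * k <= r) ->
  beta A = k%:R%R.
Proof.
move=> code0 lower; rewrite /beta; set E := (X in inf X).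
have kE : E k%:R%R by exists F0, 1, k; rewrite divr1.
have k_lb x : E x -> (k%:R <= x)%R.
  case=> F [t [r [t_gt0 [code ->]]]].
  by rewrite ler_pdivlMr ?ltr0n // -natrM ler_nat mulnC (lower _ _ _ code).
apply/eqP; rewrite eq_le (ge_inf _ kE) /=; last by exists k%:R%R.
by apply: lb_le_inf => //; exists k%:R%R.
Qed.

Lemma Bset_setD1 m (A : 'I_m -> {set 'I_m}) i : Bset A i = ~: A i :\ i.
Proof. by rewrite /Bset setCU setDE setIC. Qed.

Lemma setU1_Bset m (A : 'I_m -> {set 'I_m}) i : i \notin A i -> i |: Bset A i = ~: A i.
Proof. by move=> iA; rewrite Bset_setD1 setD1K // inE. Qed.

(** * The instance I_7(l) *)

Section Instance.
Variable l : nat.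
Hypothesis l_gt0 : 0 < l.
Local Notation m := (5 * l + 3).
Local Notation A := (I7 l).

(* Index j : 'I_m is the paper's j + 1, so parities are swapped: [base true p]
   is the odd 2p+1 of L_1, [base false p] the even 2p+2l+2 of L_2, [apex p]
   the element 4l+3+p of L_3, whose side information is the other two; the
   [free] indices are the paper's E_{L_1} and O_{L_2}. *)
Fact apex_subproof (p : 'I_l.+1) : 4 * l + 2 + p < m.
Proof. by have := ltn_ord p; lia. Qed.

Fact base_subproof b (p : 'I_l.+1) : (if b then 2 * p else 2 * p + 2 * l + 1) < m.
Proof. by have := ltn_ord p; case: b; lia. Qed.

Definition apex p : 'I_m := Ordinal (apex_subproof p).
Definition base b p : 'I_m := Ordinal (base_subproof b p).
Definition free (j : nat) :=
  (j < 2 * l + 1) && odd j || (2 * l + 1 <= j < 4 * l + 2) && ~~ odd j.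
Definition triangle p : {set 'I_m} := [set apex p; base true p; base false p].
Local Notation apexes := [set apex q | q : 'I_l.+1].
Local Notation bases b := [set base b q | q : 'I_l.+1].

Variant index_spec : 'I_m -> Type :=
  | IndexApex p : index_spec (apex p)
  | IndexBase b p : index_spec (base b p)
  | IndexFree (j : 'I_m) : free j -> index_spec j.

Lemma indexP (j : 'I_m) : index_spec j.
Proof.
have j_lt := ltn_ord j.
have [j_ge|j_lt'] := leqP (4 * l + 2) j.
  have p_lt : j - (4 * l + 2) < l.+1 by lia.
  have -> : j = apex (Ordinal p_lt) by apply: val_inj => /=; lia.
  exact: IndexApex.
have [j_fr|j_nfr] := boolP (free j); first exact: IndexFree.
have [j_L1|j_L2] := ltnP j (2 * l + 1).
  have p_lt : j./2 < l.+1 by lia.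
  have -> : j = base true (Ordinal p_lt) by apply: val_inj => /=; rewrite /free in j_nfr; lia.
  exact: IndexBase.
have p_lt : (j - (2 * l + 1))./2 < l.+1 by lia.
have -> : j = base false (Ordinal p_lt) by apply: val_inj => /=; rewrite /free in j_nfr; lia.
exact: IndexBase.
Qed.

Lemma mem_apexes (j : 'I_m) : (j \in apexes) = (4 * l + 2 <= j).
Proof.
apply/imsetP/idP => [[q _ ->] /= | j_ge]; first lia.
have q_lt : j - (4 * l + 2) < l.+1 by have := ltn_ord j; lia.
by exists (Ordinal q_lt) => //; apply: val_inj => /=; lia.
Qed.

Lemma mem_bases b (j : 'I_m) : (j \in bases b) =
  if b then (j < 2 * l + 1) && ~~ odd j else (2 * l + 1 <= j < 4 * l + 2) && odd j.
Proof.
have j_lt := ltn_ord j.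
apply/imsetP/idP => [[q _ ->] /= | j_b]; first by have := ltn_ord q; case: b; lia.
have q_lt : (if b then j./2 else (j - (2 * l + 1))./2) < l.+1 by case: b j_b; lia.
by exists (Ordinal q_lt) => //; apply: val_inj => /=; case: b j_b q_lt; lia.
Qed.

Lemma A7_apex p j : A7nat l (apex p).+1 j = (j == (2 * p).+1) || (j == 2 * p + 2 * l + 2).
Proof.
have p_lt := ltn_ord p; rewrite /A7nat /=.
have -> : inL1 l (4 * l + 2 + p).+1 = false by rewrite /inL1; lia.
have -> : inL2 l (4 * l + 2 + p).+1 = false by rewrite /inL2; lia.
have -> : inL3 l (4 * l + 2 + p).+1 by rewrite /inL3; lia.
have -> : 2 * ((4 * l + 2 + p).+1 - 4 * l - 2) - 1 = (2 * p).+1 by lia.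
by have -> : 2 * ((4 * l + 2 + p).+1 - 3 * l - 2) = 2 * p + 2 * l + 2 by lia.
Qed.

Lemma A7_base_true p j : A7nat l (base true p).+1 j =
  [|| inL1 l j && ~~ odd j, inL2 l j && (j != 2 * p + 2 * l + 2) | inL3 l j].
Proof.
have p_lt := ltn_ord p; rewrite /A7nat /=.
have -> : inL1 l (2 * p).+1 && odd (2 * p).+1 by rewrite /inL1; lia.
by have -> : (2 * p).+1 + (2 * l + 1) = 2 * p + 2 * l + 2 by lia.
Qed.

Lemma A7_base_false p j : A7nat l (base false p).+1 j =
  [|| inL2 l j && odd j, inL1 l j && (j != (2 * p).+1) | inL3 l j].
Proof.
have p_lt := ltn_ord p; rewrite /A7nat /=.
have -> : inL1 l (2 * p + 2 * l + 1).+1 = false by rewrite /inL1; lia.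
have -> : inL2 l (2 * p + 2 * l + 1).+1 && ~~ odd (2 * p + 2 * l + 1).+1 by rewrite /inL2; lia.
by have -> : (2 * p + 2 * l + 1).+1 - (2 * l + 1) = (2 * p).+1 by lia.
Qed.

Lemma A7_free_L1 (i : nat) j : i < 2 * l + 1 -> odd i ->
  A7nat l i.+1 j = [|| inL2 l j && odd j, inL1 l j && (j != i.+1) | inL3 l j].
Proof.
move=> i_lt i_odd; rewrite /A7nat.
have -> : inL1 l i.+1 && odd i.+1 = false by rewrite /inL1; lia.
by have -> : inL1 l i.+1 && ~~ odd i.+1 by rewrite /inL1; lia.
Qed.

Lemma A7_free_L2 (i : nat) j : 2 * l + 1 <= i < 4 * l + 2 -> ~~ odd i ->
  A7nat l i.+1 j = [|| inL1 l j && ~~ odd j, inL2 l j && (j != i.+1) | inL3 l j].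
Proof.
move=> i_L2 i_even; rewrite /A7nat.
have -> : inL1 l i.+1 = false by rewrite /inL1; lia.
have -> : inL2 l i.+1 && ~~ odd i.+1 = false by rewrite /inL2; lia.
by have -> : inL2 l i.+1 && odd i.+1 by rewrite /inL2; lia.
Qed.

Lemma I7_apex p : A (apex p) = [set base true p; base false p].
Proof.
apply/setP => j; rewrite !inE A7_apex -!val_eqE /=.
by apply/idP/idP; lia.
Qed.

Lemma setC_I7_base b p : ~: A (base b p) = base (~~ b) p |: bases b.
Proof.
apply/setP => j; have := ltn_ord p; have := ltn_ord j.
case: b; rewrite !inE mem_bases -val_eqE /= ?A7_base_true ?A7_base_false;
  by rewrite /inL1 /inL2 /inL3; lia.
Qed.

Lemma setC_I7_free (j : 'I_m) : free j -> ~: A j = j |: bases (2 * l + 1 <= j).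
Proof.
rewrite /free => /orP[/andP[j_L1 j_odd] | /andP[j_L2 j_even]];
  apply/setP => j'; have := ltn_ord j'; rewrite !inE mem_bases -val_eqE.
  have -> : (2 * l + 1 <= j) = false by lia.
  by rewrite A7_free_L1 // /inL1 /inL2 /inL3 /=; lia.
by case/andP: (j_L2) => -> _; rewrite A7_free_L2 // /inL1 /inL2 /inL3 /=; lia.
Qed.

Lemma I7_irrefl (i : 'I_m) : i \notin A i.
Proof.
rewrite inE; case: (indexP i) => [p | [] p | j].
- by rewrite A7_apex /=; have := ltn_ord p; lia.
- by rewrite A7_base_true /inL1 /inL2 /inL3 /=; have := ltn_ord p; lia.
- by rewrite A7_base_false /inL1 /inL2 /inL3 /=; have := ltn_ord p; lia.
rewrite /free => /orP[/andP[j_L1 j_odd] | /andP[j_L2 j_even]].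
  by rewrite A7_free_L1 // eqxx /inL1 /inL2 /inL3; lia.
by rewrite A7_free_L2 // eqxx /inL1 /inL2 /inL3; lia.
Qed.

Lemma base_inj b : injective (base b).
Proof. by move=> p q /(congr1 val) /=; case: b => pq; apply: val_inj => /=; lia. Qed.

Lemma apex_inj : injective apex.
Proof. by move=> p q /(congr1 val) /= pq; apply: val_inj => /=; lia. Qed.

Lemma base_eq b b' p q : (base b p == base b' q) = (b == b') && (p == q).
Proof.
by rewrite -!val_eqE /=; have := ltn_ord p; have := ltn_ord q; case: b; case: b'; lia.
Qed.

Lemma mem_triangle_base b p q : (base b q \in triangle p) = (p == q).
Proof.
by have := ltn_ord q; case: b; rewrite /triangle !inE -!val_eqE /=; lia.
Qed.

Lemma mem_bases_base b b' p : (base b p \in bases b') = (b == b').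
Proof.
apply/imsetP/eqP => [[q _ /eqP] | <-]; last by exists p.
by rewrite base_eq => /andP[/eqP].
Qed.

Lemma base_neq_free b p (j : 'I_m) : free j -> (base b p == j) = false.
Proof.
move=> j_free; apply: contraTF j_free => /eqP <-.
by rewrite /free /=; have := ltn_ord p; case: b; lia.
Qed.

Lemma apex_notin_bases b q : apex q \notin bases b.
Proof. by rewrite mem_bases /=; case: b; lia. Qed.

Lemma base_notin_bases b q : base (~~ b) q \notin bases b.
Proof. by have := ltn_ord q; case: b; rewrite mem_bases /=; lia. Qed.

Lemma base_notin_apexes b q : base b q \notin apexes.
Proof. by have := ltn_ord q; case: b; rewrite mem_apexes /=; lia. Qed.

Lemma free_notin_bases b (j : 'I_m) : free j -> j \notin bases b.
Proof. by rewrite mem_bases /free; case: b; lia. Qed.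

Lemma free_notin_apexes (j : 'I_m) : free j -> j \notin apexes.
Proof. by rewrite mem_apexes /free; lia. Qed.

(* The last row is 1 |: A 1 (paper's receiver 2), the row UMCD adds when it
   picks 1 right after the apexes. *)
Definition code_rows (k : 'I_l.+2) : {set 'I_m} :=
  if unlift ord_max k is Some p then triangle p else ~: bases false.

Section Decoding.
Variables (V : zmodType) (x x' : {ffun 'I_m -> 'rV[V]_1}).
Hypothesis code_eq : sum_code code_rows x = sum_code code_rows x'.

Lemma peel_triangle p (j0 : 'I_m) :
  j0 \in triangle p -> {in triangle p :\ j0, x =1 x'} -> x j0 = x' j0.
Proof.
have row_p : code_rows (lift ord_max p) = triangle p by rewrite /code_rows liftK.
by rewrite -row_p; apply: sum_code_peel.
Qed.

Lemma peel_base p b :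
  x (apex p) = x' (apex p) -> x (base (~~ b) p) = x' (base (~~ b) p) ->
  x (base b p) = x' (base b p).
Proof.
move=> x_apex x_base; apply: (@peel_triangle p) => [|j].
  by case: b {x_base}; rewrite /triangle !inE ?eqxx ?orbT.
rewrite /triangle !inE; case: b x_base => x_base /andP[j_ne /orP[/orP[]|] /eqP j_eq].
all: by subst j; rewrite ?eqxx in j_ne.
Qed.

Lemma peel_last (j0 : 'I_m) : j0 \notin bases false ->
  (forall j, j != j0 -> j \notin bases false -> x j = x' j) -> x j0 = x' j0.
Proof.
have row_max : code_rows ord_max = ~: bases false by rewrite /code_rows unlift_none.
move=> j0_last known; apply: (sum_code_peel code_eq (k := ord_max)) => [|j].
  by rewrite row_max inE.
by rewrite row_max in_setD1 in_setC => /andP[]; apply: known.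
Qed.

Lemma eq_by_index : (forall q, x (apex q) = x' (apex q)) ->
  (forall b q, x (base b q) = x' (base b q)) -> (forall j : 'I_m, free j -> x j = x' j) ->
  x =1 x'.
Proof. by move=> x_apex x_base x_free j; case: (indexP j). Qed.

Lemma agree_off (B : {set 'I_m}) (y : 'I_m) : {in ~: (y |: B), x =1 x'} ->
  forall j, j != y -> j \notin B -> x j = x' j.
Proof. by move=> known j j_y j_B; apply: known; rewrite !inE negb_or j_y. Qed.

Lemma agree_off_apex b (y : 'I_m) : y \notin apexes -> {in ~: (y |: bases b), x =1 x'} ->
  forall q, x (apex q) = x' (apex q).
Proof.
move=> y_apex /agree_off known q; apply: known (apex_notin_bases b q).
by apply: contraNneq y_apex => <-; apply: imset_f.
Qed.

Lemma recover_bases_false (y : 'I_m) : y \notin apexes -> y \notin bases false ->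
  {in ~: (y |: bases false), x =1 x'} -> x =1 x'.
Proof.
move=> y_apex y_b known; have x_apex := agree_off_apex y_apex known.
move/agree_off: known => known.
have x_y : x y = x' y := peel_last y_b known.
have x_true q : x (base true q) = x' (base true q).
  by have [-> // | /eqP q_y] := base true q =P y; apply: known q_y (base_notin_bases false q).
apply: eq_by_index => [// | [] q // | j j_free].
  exact: (peel_base (b := false) (x_apex q) (x_true q)).
by have [-> // | /eqP j_y] := j =P y; apply: known j_y (free_notin_bases false j_free).
Qed.

Lemma recover_bases_true_base p : {in ~: (base false p |: bases true), x =1 x'} -> x =1 x'.
Proof.
move=> known; have x_apex := agree_off_apex (base_notin_apexes false p) known.
move/agree_off: known => known.
have x_true q : q != p -> x (base true q) = x' (base true q).
  move=> q_p; apply: (peel_base (b := true) (x_apex q)).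
  by apply: known (base_notin_bases true q); rewrite (inj_eq (@base_inj false)).
have x_tp : x (base true p) = x' (base true p).
  apply: (@peel_last (base true p)) => [|j j_ne j_nb]; first exact: (base_notin_bases false p).
  have [/imsetP[q _ j_q] | j_nt] := boolP (j \in bases true).
    by rewrite j_q x_true //; apply: contraNneq j_ne => <-; rewrite j_q.
  by apply: known j_nt; apply: contraNneq j_nb => ->; apply: imset_f.
have x_fp := peel_base (b := false) (x_apex p) x_tp.
apply: eq_by_index => [// | [] q | j j_free].
- by have [-> // | /x_true] := eqVneq q p.
- have [-> // | q_p] := eqVneq q p; apply: known (base_notin_bases true q).
  by rewrite (inj_eq (@base_inj false)).
by apply: known (free_notin_bases true j_free); rewrite eq_sym base_neq_free.
Qed.

Lemma recover_bases_true_free (y : 'I_m) : free y -> {in ~: (y |: bases true), x =1 x'} -> x =1 x'.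
Proof.
move=> y_free known; have x_apex := agree_off_apex (free_notin_apexes y_free) known.
move/agree_off: known => known.
have x_true q : x (base true q) = x' (base true q).
  apply: (peel_base (b := true) (x_apex q)).
  by apply: known (base_notin_bases true q); rewrite base_neq_free.
have x_y : x y = x' y.
  apply: (@peel_last y) => [|j j_ne j_nb]; first exact: (free_notin_bases false y_free).
  by have [/imsetP[q _ ->] | j_nt] := boolP (j \in bases true); [apply: x_true | apply: known].
apply: eq_by_index => [// | [] q // | j j_free].
  by apply: known (base_notin_bases true q); rewrite base_neq_free.
by have [-> // | /eqP j_y] := j =P y; apply: known j_y (free_notin_bases true j_free).
Qed.

Lemma decode_I7 i : {in A i, x =1 x'} -> x i = x' i.
Proof.
rewrite -[A i]setCK; case: (indexP i) => [p | b p | j j_free] known.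
- have x_base b : x (base b p) = x' (base b p).
    by apply: known; rewrite setCK I7_apex !inE; case: b; rewrite eqxx ?orbT.
  apply: (@peel_triangle p) => [|j]; first by rewrite /triangle !inE eqxx.
  rewrite /triangle !inE => /andP[j_ne /orP[/orP[]|] /eqP j_eq]; subst j.
  + by rewrite eqxx in j_ne.
  + exact: x_base.
  + exact: x_base.
- rewrite setC_I7_base in known; case: b known => known.
    exact: (recover_bases_true_base known).
  exact: (recover_bases_false (base_notin_apexes true p) (base_notin_bases false p) known).
rewrite setC_I7_free // in known; move: known; case: (2 * l + 1 <= j) => known.
  exact: (recover_bases_true_free j_free known).
exact: (recover_bases_false (free_notin_apexes j_free) (free_notin_bases false j_free) known).
Qed.

End Decoding.

Lemma has_code_I7 (F : finFieldType) : has_code F 1 l.+2 A.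
Proof.
apply: (decodable_has_code (phi := sum_code code_rows)) => i x x' code_eq.
exact: decode_I7.
Qed.

Fact one_subproof : 1 < m. Proof. lia. Qed.

Lemma has_code_I7_leq (F : finFieldType) t r : has_code F t r A -> t * l.+2 <= r.
Proof.
pose v : 'I_m := Ordinal one_subproof.
have v_free : free v by rewrite /free /=; lia.
have card_S : #|v |: apexes| = l.+2.
  by rewrite cardsU1 free_notin_apexes // card_imset ?card_ord //; apply: apex_inj.
rewrite -card_S; apply: (has_code_acyclic (rk := fun j => j == v)) => i j.
rewrite !in_setU1 => /orP[/eqP -> _ jA | /imsetP[p _ ->] /orP[/eqP -> | /imsetP[q _ ->]]].
- rewrite eqxx ltnS leqn0 eqb0; apply: contraTneq jA => ->; exact: I7_irrefl.
- by rewrite I7_apex !inE -!val_eqE /v /=; lia.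
- by rewrite I7_apex !inE -!val_eqE /v /=; have := ltn_ord p; lia.
Qed.

(** * The UMCD run *)

Lemma triangleE p : apex p |: A (apex p) = triangle p.
Proof. by apply/setP => j; rewrite I7_apex !inE orbA. Qed.

Lemma card_I7_apex p : #|A (apex p)| <= 2.
Proof. by rewrite I7_apex cards2; case: (_ != _). Qed.

Lemma card_setC_I7 i : i \notin apexes -> #|~: A i| = l.+2.
Proof.
case: (indexP i) => [p | b p _ | j j_free _]; first by rewrite imset_f.
  by rewrite setC_I7_base cardsU1 base_notin_bases card_imset ?card_ord //; apply: base_inj.
by rewrite setC_I7_free // cardsU1 free_notin_bases // card_imset ?card_ord //; apply: base_inj.
Qed.

Lemma card_I7_nonapex i : i \notin apexes -> 2 < #|A i|.
Proof. by move/card_setC_I7; have := cardsC (A i); rewrite card_ord; lia. Qed.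

Lemma bases_cover w p : w \notin apexes ->
  (base true p \in w |: A w) || (base false p \in w |: A w).
Proof.
rewrite -[A w]setCK; case: (indexP w) => [q | b q _ | j j_free _]; first by rewrite imset_f.
  by case: b; rewrite setC_I7_base !inE !base_eq !mem_bases_base /= ?orbF; case: eqP.
by rewrite setC_I7_free // !inE !base_neq_free // !mem_bases_base; case: (_ <= _).
Qed.

Lemma free_in_row w (j : 'I_m) : w \notin apexes -> free j -> j != w -> j \in w |: A w.
Proof.
move=> + j_free; rewrite -[A w]setCK.
case: (indexP w) => [q | b q _ | w' w_free _]; first by rewrite imset_f.
  by rewrite setC_I7_base !inE ![j == _]eq_sym !base_neq_free // free_notin_bases.
by rewrite setC_I7_free // !inE => /negbTE ->; rewrite free_notin_bases.
Qed.

Lemma leq_mcm_rcons_triangles s (R : {set 'I_m}) b y :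
  uniq s -> (forall q, q \in s) -> y \notin bases b ->
  (y \in R \/ exists2 p, y = base (~~ b) p & base b p \in R) ->
  l.+2 <= mcm (rcons (map triangle s) R) (y |: bases b).
Proof.
move=> s_uniq s_all y_b yR.
have -> : l.+2 = (size s).+1 by rewrite size_uniq_all ?card_ord.
case: yR => [y_R | [p -> bp_R]].
  apply: (leq_mcm_rcons (g := base b) (c := y) s_uniq (@base_inj b)) => [q | | // | q].
  - by rewrite setU1r ?imset_f ?mem_triangle_base.
  - exact: setU11.
  - by apply: contraNneq y_b => <-; apply: imset_f.
pose g q := if q == p then base (~~ b) p else base b q.
have g_inj : injective g.
  move=> q q'; rewrite /g.
  have [->|q_p] := eqVneq q p; have [->|q'_p] := eqVneq q' p => //.
  - by move/eqP; rewrite base_eq; case: (b).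
  - by move/eqP; rewrite base_eq; case: (b).
  - by move/eqP; rewrite base_eq eqxx => /eqP.
apply: (leq_mcm_rcons (g := g) (c := base b p) s_uniq g_inj) => [q | | // | q]; rewrite /g.
- have [->|q_p] := eqVneq q p; first by rewrite setU11 mem_triangle_base.
  by rewrite setU1r ?imset_f ?mem_triangle_base.
- by rewrite setU1r ?imset_f.
- have [_|q_p] := eqVneq q p; rewrite base_eq ?eqxx ?andbT //.
  by case: (b).
Qed.

Lemma leq_mcm_setC_I7 s w i : uniq s -> (forall q, q \in s) ->
  w \notin apexes -> i \notin apexes -> i != w ->
  l.+2 <= mcm (rcons (map triangle s) (w |: A w)) (~: A i).
Proof.
move=> s_uniq s_all w_apex; case: (indexP i) => [p | b p _ _ | j j_free _ j_w].
- by rewrite imset_f.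
- rewrite setC_I7_base; apply: leq_mcm_rcons_triangles (base_notin_bases b p) _ => //.
  have [bp_R | bp_nR] := boolP (base (~~ b) p \in w |: A w); [by left | right; exists p => //].
  by move: (bases_cover p w_apex); case: b bp_nR => /negbTE ->; rewrite ?orbF.
rewrite setC_I7_free //; apply: leq_mcm_rcons_triangles (free_notin_bases _ j_free) _ => //.
by left; apply: free_in_row.
Qed.

Lemma mcm_triangles_setU1 s i : uniq s -> (forall q, q \in s -> i != apex q) ->
  mcm (map triangle s) (i |: Bset A i) <= mcm (map triangle s) (Bset A i).
Proof.
move=> s_uniq i_s; apply: mcm_setU1_private => k.
have k_lt : k < size s by rewrite -(size_map triangle).
rewrite (nth_map ord0) // => i_tri; set q := nth ord0 s k in i_tri *.
have [b ->] : exists b, i = base b q.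
  move: i_tri (i_s q (mem_nth ord0 k_lt)); rewrite /triangle !inE.
  by case/orP => [/orP[] | ] /eqP ->; rewrite ?eqxx //; [exists true | exists false].
exists (base (~~ b) q).
  by rewrite Bset_setD1 in_setD1 setC_I7_base setU11 base_eq andbT; case: (b).
move=> k'; have k'_lt : k' < size s by rewrite -(size_map triangle).
by rewrite (nth_map ord0) // mem_triangle_base nth_uniq.
Qed.

Lemma mem_apexes_rcons s p i :
  (i \in [set apex q | q in rcons s p]) = (i == apex p) || (i \in [set apex q | q in s]).
Proof.
apply/imsetP/orP => [[q] | [/eqP -> | /imsetP[q q_s ->]]].
- by rewrite mem_rcons inE => /orP[/eqP -> ->| q_s ->]; [left | right; apply: imset_f].
- by exists p; rewrite ?mem_rcons ?mem_head.
- by exists q; rewrite ?mem_rcons ?inE ?q_s ?orbT.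
Qed.

Lemma umcd_next_apex s p : uniq (rcons s p) ->
  umcd_next A (~: [set apex q | q in s]) (map triangle s) (apex p) =
  ~: [set apex q | q in rcons s p].
Proof.
move=> s_uniq; apply/setP => i; rewrite /umcd_next triangleE -map_rcons !inE mem_apexes_rcons.
rewrite negb_or; case: (i =P apex p) => //= /eqP i_p; case: (boolP (_ \in _)) => //= i_s.
have i_picked q : q \in rcons s p -> i != apex q.
  rewrite mem_rcons inE => /orP[/eqP -> // | q_s].
  by apply: contraNneq i_s => ->; apply: imset_f.
have := mcm_triangles_setU1 s_uniq i_picked.
by apply: contraTneq => ->; rewrite ltnn.
Qed.

Lemma card_Bset_I7 i : i \notin apexes -> #|Bset A i| = l.+1.
Proof.
move=> i_apex; have := cardsD1 i (~: A i).
by rewrite card_setC_I7 // in_setC I7_irrefl Bset_setD1 => -[].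
Qed.

Lemma umcd_next_full s w : uniq s -> (forall q, q \in s) -> w \notin apexes ->
  umcd_next A (~: [set apex q | q in s]) (map triangle s) w = set0.
Proof.
move=> s_uniq s_all w_apex; apply/setP => i; rewrite /umcd_next !inE.
have [-> | i_w] := eqVneq i w; first by [].
case: (boolP (i \in apexes)) => [/imsetP[q _ ->] | i_apex]; first by rewrite imset_f.
have i_s : i \notin [set apex q | q in s].
  by apply: contra i_apex => /imsetP[q _ ->]; apply: imset_f.
rewrite i_s /=.
apply/negbF/eqP/eqP; rewrite eqn_leq mcm_setU1 setU1_Bset ?I7_irrefl //=.
apply: leq_trans (leq_mcm_setC_I7 s_uniq s_all w_apex i_apex i_w); rewrite ltnS.
by rewrite (leq_trans (mcm_leq_card _ _)) ?card_Bset_I7.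
Qed.

Lemma notin_apexes_seq (s : seq 'I_l.+1) i : i \notin apexes -> i \notin [set apex q | q in s].
Proof. by apply: contra => /imsetP[q _ ->]; apply: imset_f. Qed.

Lemma umcd_run_size (s : seq 'I_l.+1) ws : uniq s ->
  umcd_run A (~: [set apex q | q in s]) (map triangle s) ws -> size s + size ws = l.+2.
Proof.
elim: ws s => [|w ws IH] s s_uniq /=.
  by move/eqP/setP/(_ (base true ord0)); rewrite !inE notin_apexes_seq ?base_notin_apexes.
case/and3P => w_N /forall_inP w_min run.
have [s_all | [q0 q0_s]] : (forall q, q \in s) \/ exists q0, q0 \notin s.
  by case: (boolP [forall q, q \in s]) => [/forallP | /forallPn]; [left | right].
  have w_apex : w \notin apexes.
    by move: w_N; rewrite inE; apply: contra => /imsetP[q _ ->]; apply: imset_f (s_all q).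
  rewrite umcd_next_full // in run.
  by case: ws {IH} run => [_ | w' ws] /=; [rewrite size_uniq_all ?card_ord ?addn1 | rewrite inE].
have q0_N : apex q0 \in ~: [set apex q | q in s].
  by rewrite inE; apply: contra q0_s => /imsetP[q q_s /apex_inj ->].
have [p w_p] : exists p, w = apex p.
  have w_small := leq_trans (w_min _ q0_N) (card_I7_apex q0).
  case: (indexP w) w_small => [p | b p | j j_free] w_small; first by exists p.
    by have := card_I7_nonapex (base_notin_apexes b p); rewrite ltnNge w_small.
  by have := card_I7_nonapex (free_notin_apexes j_free); rewrite ltnNge w_small.
subst w; have p_s : p \notin s by move: w_N; rewrite inE; apply: contra => p_s; apply: imset_f.
have ps_uniq : uniq (rcons s p) by rewrite rcons_uniq p_s.
rewrite umcd_next_apex // triangleE -map_rcons in run.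
by rewrite -addSnnS -(size_rcons s p); apply: IH.
Qed.

Lemma umcd_output_I7 k : umcd_output A k -> k = l.+2.
Proof.
case=> ws [run <-].
have N0 : ~: [set apex q | q in [::]] = [set: 'I_m].
  by apply/setP => i; rewrite !inE; apply/imsetP => -[].
rewrite -N0 in run; have := umcd_run_size (s := [::]) isT run.
by rewrite add0n.
Qed.

End Instance.

Theorem proposition11 (l : nat) (hl : (1 <= l)%N) (k : nat) :
  umcd_output (I7 l) k -> beta (I7 l) = (k%:R)%R.
Proof.
move=> /(umcd_output_I7 hl) ->.
exact: beta_eq_nat (has_code_I7 hl 'F_2) (fun F t r => @has_code_I7_leq l hl F t r).
Qed.
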